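(* For every equidistributed infinite permutation $\alpha$ and every $n\ge1$, $p_{\alpha}(n)\geq n$.
   Context: An infinite permutation is an equivalence class of sequences $(a[n])_{n\ge0}$ of pairwise distinct reals, where two sequences are equivalent if $a[i]<a[j]\iff b[i]<b[j]$ for all $i,j$; write $\alpha=(\alpha[n])_{n\ge0}$ with the induced order. A factor of length $n$ is $\alpha[i..i+n-1]$ regarded as a finite permutation (relative order of its elements), independent of position; $p_\alpha(n)$ is the number of distinct factors of length $n$. A sequence $(a[n])$ in $[0,1]$ is equidistributed if $\lim_{n\to\infty}\frac{\#\{0\le i<n:a[i]<t\}}{n}=t$ for each $t\in[0,1]$; a permutation is equidistributed if it has an equidistributed representative in $[0,1]$. *)

From HB Require Import structures.
From mathcomp Require Import all_boot all_order all_algebra.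
From mathcomp Require Import all_classical all_reals all_analysis.
Set Implicit Arguments. Unset Strict Implicit. Unset Printing Implicit Defensive.
Import Order.TTheory GRing.Theory Num.Theory numFieldNormedType.Exports.
Local Open Scope ring_scope.
Local Open Scope classical_set_scope.

(* Two representatives define the same infinite permutation. *)
Definition order_equiv (R : realType) (a b : nat -> R) : Prop :=
  forall i j : nat, (a i < a j) <-> (b i < b j).

Definition equidistributed (R : realType) (a : nat -> R) : Prop :=
  (forall n, 0 <= a n <= 1) /\
  forall t : R, 0 <= t <= 1 ->
    (fun N : nat => (#|[set i : 'I_N | a i < t]%SET|%:R / N%:R : R)) @ \oo --> t.

(* The factor of length n at position i, as a finite permutation, i.e. the
   relative order of a[i..i+n-1] (independent of position). *)
Definition factor (R : realType) (a : nat -> R) (n i : nat)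
  : {ffun 'I_n * 'I_n -> bool} :=
  [ffun p : 'I_n * 'I_n => a (i + p.1)%N < a (i + p.2)%N].

Definition complexity (R : realType) (a : nat -> R) (n : nat) : nat :=
  #|[set f : {ffun 'I_n * 'I_n -> bool} | `[< exists i : nat, factor a n i = f >]]%SET|.

From mathcomp Require Import all_boot all_order all_algebra.
From mathcomp Require Import all_classical all_reals all_analysis.
From mathcomp Require Import zify ring lra.
Set Implicit Arguments. Unset Strict Implicit. Unset Printing Implicit Defensive.
Import Order.TTheory GRing.Theory Num.Theory numFieldNormedType.Exports.

(* If p(n) < n then, p being
   nondecreasing, some k has p(k) = p(k+1) <= k.
   Taking the prefix of length k is then a bijection from the factors of
   length k+1 onto those of length k, so a factor of length k+1 determines the
   next one.  Two of the first k+1 factors of length k+1 coincide, say at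
   s < t, hence the factors are periodic from s on with period P = t - s <= k.
   So for i >= s the comparison a(i) < a(i+P) only depends on i mod P, every
   residue class mod P is monotone, and for each threshold x the indicator of
   a(i) < x is eventually P-periodic.  The frequency of an eventually
   P-periodic 0-1 sequence lies in (1/P)N, which fails for x = 1/(2P). *)

Definition perm_prefix k (f : {ffun 'I_k.+1 * 'I_k.+1 -> bool}) :
  {ffun 'I_k * 'I_k -> bool} :=
  [ffun p : 'I_k * 'I_k => f (widen_ord (leqnSn k) p.1, widen_ord (leqnSn k) p.2)].

Definition perm_suffix k (f : {ffun 'I_k.+1 * 'I_k.+1 -> bool}) :
  {ffun 'I_k * 'I_k -> bool} :=
  [ffun p : 'I_k * 'I_k => f (lift ord0 p.1, lift ord0 p.2)].

Section Factors.
Variables (R : realType) (a : nat -> R).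

Definition factors k := [set f | `[< exists i, factor a k i = f >]]%SET.

Lemma complexityE k : complexity a k = #|factors k|.
Proof. by []. Qed.

Lemma factorsP k f : reflect (exists i, factor a k i = f) (f \in factors k).
Proof. by rewrite inE; apply: asboolP. Qed.

Lemma factor_in_factors k i : factor a k i \in factors k.
Proof. by apply/factorsP; exists i. Qed.

Lemma perm_prefix_factor k i : perm_prefix (factor a k.+1 i) = factor a k i.
Proof. by apply/ffunP => p; rewrite !ffunE. Qed.

Lemma perm_suffix_factor k i : perm_suffix (factor a k.+1 i) = factor a k i.+1.
Proof. by apply/ffunP => p; rewrite !ffunE /= /bump /= !add1n !addSnnS. Qed.

Lemma factors_prefix k : factors k = @perm_prefix k @: factors k.+1.
Proof.
apply/setP => f; apply/factorsP/imsetP => [[i <-]|[g /factorsP[i <-] ->]].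
  by exists (factor a k.+1 i); rewrite ?factor_in_factors ?perm_prefix_factor.
by exists i; rewrite perm_prefix_factor.
Qed.

Lemma complexity_leS k : (complexity a k <= complexity a k.+1)%N.
Proof. by rewrite !complexityE factors_prefix; apply: leq_imset_card. Qed.

Lemma complexity_stalls n : (complexity a n < n)%N ->
  exists k, complexity a k = complexity a k.+1 /\ (complexity a k.+1 <= k)%N.
Proof.
elim: n => [//|n IHn] lt_n.
have le_nS := complexity_leS n.
case: (ltnP (complexity a n) n) => [/IHn //|le_n].
by exists n; split; lia.
Qed.

Lemma factor_next_eq k s t : complexity a k = complexity a k.+1 ->
  factor a k.+1 s = factor a k.+1 t -> factor a k.+1 s.+1 = factor a k.+1 t.+1.
Proof.
move=> eq_k eq_st.
have prefix_inj : {in factors k.+1 &, injective (@perm_prefix k)}.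
  by apply/imset_injP; rewrite -factors_prefix -!complexityE eq_k.
apply: prefix_inj; rewrite ?factor_in_factors //.
by rewrite !perm_prefix_factor -!perm_suffix_factor eq_st.
Qed.

Lemma factor_shift_eq k s t : complexity a k = complexity a k.+1 ->
  factor a k.+1 s = factor a k.+1 t ->
  forall x, factor a k.+1 (s + x) = factor a k.+1 (t + x).
Proof.
move=> eq_k eq_st; elim=> [|x IHx]; first by rewrite !addn0.
by rewrite !addnS; apply: factor_next_eq.
Qed.

Lemma factor_repeats k : (complexity a k.+1 <= k)%N ->
  exists s t, (s < t <= k)%N /\ factor a k.+1 s = factor a k.+1 t.
Proof.
move=> le_k.
pose g (i : 'I_k.+1) := factor a k.+1 i.
have /injectivePn[x [y neq_xy eq_gxy]] : ~~ injectiveb g.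
  apply/injectiveP => g_inj.
  have : #|g @: [set: 'I_k.+1]| <= complexity a k.+1.
    rewrite complexityE; apply: subset_leq_card.
    by apply/fintype.subsetP => f /imsetP[i _ ->]; apply: factor_in_factors.
  by rewrite card_imset // cardsT card_ord; lia.
have [lt_x lt_y] := (ltn_ord x, ltn_ord y).
case: (ltngtP x y) => [lt_xy|lt_yx|/val_inj eq_xy].
- by exists x, y; split => //; lia.
- by exists y, x; split => //; lia.
- by rewrite eq_xy eqxx in neq_xy.
Qed.

Lemma low_complexity_periodic_comparison n : (complexity a n < n)%N ->
  exists s P, (0 < P)%N /\ forall i, (s <= i)%N ->
    (a (i + P) < a (i + P + P))%R = (a i < a (i + P))%R.
Proof.
move=> /complexity_stalls[k [stall_k /factor_repeats[s [t [/andP[lt_st le_tk] eq_st]]]]].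
exists s, (t - s)%N; split=> [|i le_si]; first by rewrite subn_gt0.
have := factor_shift_eq stall_k eq_st (i - s).
have -> : (s + (i - s) = i)%N by lia.
have -> : (t + (i - s) = i + (t - s))%N by lia.
move=> /ffunP /(_ (ord0, inord (t - s))).
by rewrite !ffunE /= inordK ?addn0 //; lia.
Qed.

End Factors.

Lemma complexity_order_equiv (R : realType) (a b : nat -> R) :
  order_equiv a b -> complexity a = complexity b.
Proof.
move=> ab; apply: funext => n; rewrite /complexity.
suff -> : factor a n = factor b n by [].
apply: funext => i; apply/ffunP => p; rewrite !ffunE.
by apply/idP/idP => /ab.
Qed.

Lemma monotone_bool_eventually_const (b : nat -> bool) :
  (forall j, b j.+1 ==> b j) -> exists J, forall j, (J <= j)%N -> b j = b J.
Proof.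
move=> b_dec; case: (pselect (exists j, ~~ b j)) => [[J bJ]|b_true].
  exists J => j /subnK <-; rewrite (negbTE bJ); apply/negbTE.
  elim: (j - J)%N => [//|d IHd]; rewrite addSn.
  by apply: contra IHd => bS; apply: implyP (b_dec _) bS.
exists 0%N => j _.
have b_all i : b i by apply/negPn/negP => nbi; apply: b_true; exists i.
by rewrite !b_all.
Qed.

Section Frequencies.
Variable R : realType.
Local Open Scope ring_scope.
Local Open Scope classical_set_scope.

Lemma threshold_eventually_const (u : nat -> R) (c : bool) (t : R) :
  (forall j, (u j < u j.+1) = c) ->
  exists J, forall j, (J <= j)%N -> (u j < t) = (u J < t).
Proof.
case: c => u_step.
  apply: monotone_bool_eventually_const => j; apply/implyP => ut.
  by apply: le_lt_trans ut; apply: ltW; rewrite u_step.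
have [J HJ] : exists J, forall j, (J <= j)%N -> ~~ (u j < t) = ~~ (u J < t).
  apply: monotone_bool_eventually_const => j; rewrite implybNN; apply/implyP => ut.
  by apply: le_lt_trans ut; rewrite leNgt u_step.
by exists J => j /HJ /negb_inj.
Qed.

Lemma threshold_eventually_periodic (a : nat -> R) s P (t : R) : (0 < P)%N ->
  (forall i, (s <= i)%N -> (a (i + P)%N < a (i + P + P)%N) = (a i < a (i + P)%N)) ->
  exists K, forall N, (K <= N)%N -> (a (N + P)%N < t) = (a N < t).
Proof.
move=> P_gt0 cmp_periodic.
have class_step (r : 'I_P) j :
    (a (s + r + j * P)%N < a (s + r + j.+1 * P)%N) = (a (s + r)%N < a (s + r + P)%N).
  elim: j => [|j <-]; first by rewrite mul0n addn0 mul1n.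
  have -> : (s + r + j.+2 * P = s + r + j * P + P + P)%N by rewrite !mulSn; lia.
  have -> : (s + r + j.+1 * P = s + r + j * P + P)%N by rewrite mulSn; lia.
  by apply: cmp_periodic; rewrite -addnA leq_addr.
have /fin_all_exists[J HJ] : forall r : 'I_P, exists J, forall j, (J <= j)%N ->
    (a (s + r + j * P)%N < t) = (a (s + r + J * P)%N < t).
  by move=> r; apply: threshold_eventually_const (class_step r).
pose M := (\max_(r < P) J r)%N.
have le_JM r : (J r <= M)%N by apply: leq_bigmax.
exists (s + M * P)%N => N le_KN.
pose r := Ordinal (ltn_pmod (N - s) P_gt0).
pose q := ((N - s) %/ P)%N.
have N_eq : N = (s + r + q * P)%N by rewrite /= /q; have := divn_eq (N - s) P; lia.
have le_Jq : (J r <= q)%N.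
  by apply: leq_trans (le_JM r) _; rewrite leq_divRL //; lia.
have NP_eq : (N + P = s + r + q.+1 * P)%N by rewrite N_eq mulSn; lia.
by rewrite NP_eq N_eq (HJ r q.+1) ?(HJ r q) //; lia.
Qed.

Lemma sum_eventually_periodic (p : nat -> bool) K P :
  (forall N, (K <= N)%N -> p (N + P)%N = p N) ->
  exists w, forall N M, (K <= N)%N ->
    (\sum_(0 <= i < N + M * P) p i = \sum_(0 <= i < N) p i + M * w)%N.
Proof.
move=> p_periodic; exists (\sum_(K <= i < K + P) p i)%N.
have sum_shift N : (K <= N)%N ->
    (\sum_(0 <= i < N + P) p i = \sum_(0 <= i < N) p i + \sum_(K <= i < K + P) p i)%N.
  move=> /subnK <-; elim: (N - K)%N => [|d IHd].
    by rewrite add0n -big_cat_nat ?leq_addr.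
  rewrite !addSn big_nat_recr ?leq0n // big_nat_recr ?leq0n //= IHd.
  by rewrite p_periodic ?leq_addl // addnAC.
move=> N M le_KN; elim: M => [|M IHM]; first by rewrite !mul0n !addn0.
have -> : (N + M.+1 * P = N + M * P + P)%N by rewrite mulSn; lia.
by rewrite sum_shift ?IHM ?mulSn; lia.
Qed.

Lemma card_ord_pred (p : nat -> bool) N :
  #|[set i : 'I_N | p i]%SET| = (\sum_(0 <= i < N) p i)%N.
Proof.
rewrite -sum1_card big_mkcond /= big_mkord; apply: eq_bigr => i _.
by rewrite inE; case: (p i).
Qed.

(* Along N and N (P + 1) the frequency f satisfies
   f (N (P + 1)) = (f N + w) / (P + 1), and both tend to t. *)
Lemma frequency_eventually_periodic (p : nat -> bool) K P (t : R) : (0 < P)%N ->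
  (forall N, (K <= N)%N -> p (N + P)%N = p N) ->
  (fun N : nat => #|[set i : 'I_N | p i]%SET|%:R / N%:R : R) @ \oo --> t ->
  exists w : nat, t * P%:R = w%:R.
Proof.
move=> P_gt0 /sum_eventually_periodic[w sum_w].
set f := (fun N : nat => _) => f_cvg; exists w.
have f_scale : \forall N \near \oo, f (N * P.+1)%N = (f N + w%:R) / P.+1%:R.
  near=> N; have N_gt0 : (0 < N)%N by near: N; apply: nbhs_infty_ge.
  have le_KN : (K <= N)%N by near: N; apply: nbhs_infty_ge.
  rewrite /f !card_ord_pred mulnS sum_w // !natrD !natrM -addn1 natrD.
  have [N_pos P_ge0] : 0 < N%:R :> R /\ 0 <= P%:R :> R by rewrite ltr0n ler0n.
  by field; apply/and3P; split; rewrite gt_eqF //; nra.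
have lim1 : (f \o muln^~ P.+1) @ \oo --> t :=
  cvg_comp _ _ (cvg_mulnr _ (ltn0Sn P)) f_cvg.
have lim2 : (fun N => (f N + w%:R) / P.+1%:R) @ \oo --> (t + w%:R) / P.+1%:R.
  by apply: cvgM; [apply: cvgD f_cvg _|]; apply: cvg_cst.
have t_eq : t = (t + w%:R) / P.+1%:R.
  apply: norm_cvg_unique lim1 _; apply: cvg_trans lim2.
  by apply: near_eq_cvg; apply: filterS f_scale => N /esym.
have : t * P.+1%:R = t + w%:R by rewrite {1}t_eq mulfVK // pnatr_eq0.
by rewrite -[P.+1]addn1 natrD => ?; lra.
Unshelve. all: by end_near.
Qed.

End Frequencies.

Local Open Scope ring_scope.

Theorem proposition3 (R : realType) (b : nat -> R) (hb : injective b)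
  (heq : exists a : nat -> R, injective a /\ order_equiv a b /\ equidistributed a)
  (n : nat) (hn : (1 <= n)%N) :
  (n <= complexity b n)%N.
Proof.
case: heq => a [_ [ab [_ a_freq]]].
rewrite -(complexity_order_equiv ab) leqNgt.
apply/negP => /low_complexity_periodic_comparison[s [P [P_gt0 cmp_periodic]]].
pose t : R := (2 * P%:R)^-1.
have P_ge1 : 1 <= P%:R :> R by rewrite ler1n.
have t01 : 0 <= t <= 1.
  by rewrite invr_ge0 invf_le1 ?mulr_ge0 ?ler0n //=; lra.
have [K threshold_periodic] := threshold_eventually_periodic t P_gt0 cmp_periodic.
have [w tP_w] := frequency_eventually_periodic P_gt0 threshold_periodic (a_freq t t01).
have : (w * 2)%:R = 1 :> R.
  by rewrite natrM -tP_w /t; field; rewrite gt_eqF //; lra.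
by rewrite -[1]/(1%:R) => /eqP; rewrite eqr_nat; lia.
Qed.
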